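(* Let $X$ be an extremally disconnected topological space in which every $\Lambda$-set is open, and let $g,f:X\to\mathbb{R}$ be functions such that $f$ is lower semi-contra-continuous, $g$ is upper semi-contra-continuous, and $g\le f$. Then there exists a contra-continuous function $h:X\to\mathbb{R}$ such that $g\le h\le f$.
   Context: A $\Lambda$-set in $X$ is an intersection of open sets. A function $f:X\to\mathbb{R}$ is upper semi-contra-continuous (resp. lower semi-contra-continuous) if $f^{-1}(-\infty,t)$ (resp. $f^{-1}(t,+\infty)$) is closed in $X$ for every real $t$. A function $h:X\to\mathbb{R}$ is contra-continuous if the preimage of every open subset of $\mathbb{R}$ is closed in $X$. $g\le f$ means $g(x)\le f(x)$ for all $x\in X$. *)

From HB Require Import structures.
From mathcomp Require Import all_boot all_order all_algebra.
From mathcomp Require Import all_classical all_reals all_analysis.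
Set Implicit Arguments. Unset Strict Implicit. Unset Printing Implicit Defensive.
Import Order.TTheory GRing.Theory Num.Theory.
Import numFieldNormedType.Exports.
Local Open Scope classical_set_scope.
Local Open Scope ring_scope.

Definition extremally_disconnected (X : topologicalType) : Prop :=
  forall U : set X, open U -> open (closure U).

Definition Lambda_set (X : topologicalType) (A : set X) : Prop :=
  exists (I : Type) (F : I -> set X),
    (forall i, open (F i)) /\ A = \bigcap_(i in [set: I]) F i.

Definition upper_semi_contra_continuous (X : topologicalType) (R : realType)
  (f : X -> R) : Prop :=
  forall t : R, closed (f @^-1` [set x | x < t]).

Definition lower_semi_contra_continuous (X : topologicalType) (R : realType)
  (f : X -> R) : Prop :=
  forall t : R, closed (f @^-1` [set x | t < x]).

Definition contra_continuous (X : topologicalType) (R : realType)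
  (h : X -> R) : Prop :=
  forall U : set R, open U -> closed (h @^-1` U).

(* Since every Lambda-set is open, the kernel of a point x (the intersection of its open
   neighbourhoods) is open, and a set is closed exactly when it is downward closed for the
   specialization preorder x <= y ("every open set containing x contains y").  Hence g
   increases and f decreases along this preorder.  The closure of the kernel of x is the set
   of points sharing an upper bound with x; by extremal disconnectedness it is open, and
   these sets partition X.  The function h x := sup of g over the block of x is therefore
   invariant along the preorder, hence contra-continuous, and g w <= g z <= f z <= f x for w, x in a block with
   common upper bound z gives g <= h <= f. *)
From HB Require Import structures.
From mathcomp Require Import all_boot all_order all_algebra.
From mathcomp Require Import all_classical all_reals all_analysis.
Import Order.TTheory GRing.Theory Num.Theory.
Import numFieldNormedType.Exports.
Local Open Scope classical_set_scope.
Local Open Scope ring_scope.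
Set Implicit Arguments. Unset Strict Implicit.

Section Specialization.
Variable X : topologicalType.

Definition spec_le (x y : X) : Prop := forall U : set X, open U -> U x -> U y.

Definition joinable (x : X) : set X := [set w | exists z, spec_le x z /\ spec_le w z].

Lemma spec_le_refl (x : X) : spec_le x x.
Proof. by []. Qed.

Lemma spec_le_trans (x y z : X) : spec_le x y -> spec_le y z -> spec_le x z.
Proof. by move=> hxy hyz U oU Ux; apply: hyz => //; apply: hxy. Qed.

Lemma joinable_refl (x : X) : joinable x x.
Proof. by exists x; split; apply: spec_le_refl. Qed.

Lemma closed_spec_le (C : set X) (x y : X) : closed C -> spec_le x y -> C y -> C x.
Proof.
move=> cC hxy Cy; apply: cC => B; rewrite nbhsE => -[V [oV Vx] VB].
by exists y; split => //; apply: VB; apply: hxy.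
Qed.

Hypothesis Lambda_open : forall A : set X, Lambda_set A -> open A.

Lemma open_spec_ge (x : X) : open [set y | spec_le x y].
Proof.
apply: Lambda_open.
exists {U : set X | open U /\ U x}, (fun U => sval U); split.
  by move=> [U []].
apply/seteqP; split=> [y hy [U [oU Ux]] _ | y hy U oU Ux]; first exact: hy.
exact: (hy (exist _ U (conj oU Ux))).
Qed.

Lemma spec_ge_meets_closure (A : set X) (w : X) :
  closure A w -> exists2 z, A z & spec_le w z.
Proof.
move=> clAw; have [z [Az wz]] : A `&` [set y | spec_le w y] !=set0.
  by apply: clAw; apply: open_nbhs_nbhs; split; [exact: open_spec_ge | exact: spec_le_refl].
by exists z.
Qed.

Lemma closed_spec_down (C : set X) :
  (forall x y, spec_le x y -> C y -> C x) -> closed C.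
Proof.
by move=> Cdown w /spec_ge_meets_closure[z Cz wz]; apply: Cdown wz Cz.
Qed.

Lemma joinable_closure (x : X) : joinable x = closure [set y | spec_le x y].
Proof.
apply/seteqP; split=> [w [z [xz wz]] B | w /spec_ge_meets_closure[z xz wz]].
  rewrite nbhsE => -[V [oV Vw] VB].
  by exists z; split => //; apply: VB; apply: wz.
by exists z.
Qed.

Hypothesis extremal : extremally_disconnected X.

Lemma open_joinable (x : X) : open (joinable x).
Proof. by rewrite joinable_closure; apply: extremal; apply: open_spec_ge. Qed.

Lemma joinable_sub (x y : X) : joinable x y -> joinable y `<=` joinable x.
Proof.
move=> xy w [z [yz wz]].
have [z' [xz' zz']] : joinable x z by apply: yz xy; apply: open_joinable.
by exists z'; split => //; apply: spec_le_trans wz zz'.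
Qed.

Lemma joinable_spec_le (x y : X) : spec_le x y -> joinable y = joinable x.
Proof.
by move=> xy; apply/seteqP; split; apply: joinable_sub; exists y;
  split => //; apply: spec_le_refl.
Qed.

End Specialization.

Section SemiContraContinuity.
Variables (R : realType) (X : topologicalType).

Lemma lower_semi_contra_continuous_spec_le (f : X -> R) (x y : X) :
  lower_semi_contra_continuous f -> spec_le x y -> f y <= f x.
Proof.
move=> hf xy; rewrite leNgt; apply/negP => /(closed_spec_le (hf (f x)) xy).
by rewrite /= ltxx.
Qed.

Lemma upper_semi_contra_continuous_spec_le (g : X -> R) (x y : X) :
  upper_semi_contra_continuous g -> spec_le x y -> g x <= g y.
Proof.
move=> hg xy; rewrite leNgt; apply/negP => /(closed_spec_le (hg (g x)) xy).
by rewrite /= ltxx.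
Qed.

Lemma spec_invariant_contra_continuous (h : X -> R) :
  (forall A : set X, Lambda_set A -> open A) ->
  (forall x y, spec_le x y -> h x = h y) -> contra_continuous h.
Proof.
move=> hL hinv U _; apply: (closed_spec_down hL) => x y /hinv xy.
by rewrite /= xy.
Qed.

End SemiContraContinuity.

Theorem corollary1 (R : realType) (X : topologicalType)
  (hX : extremally_disconnected X)
  (hL : forall A : set X, Lambda_set A -> open A)
  (g f : X -> R)
  (hf : lower_semi_contra_continuous f)
  (hg : upper_semi_contra_continuous g)
  (hgf : forall x, g x <= f x) :
  exists h : X -> R, contra_continuous h /\ (forall x, g x <= h x /\ h x <= f x).
Proof.
have ub x : ubound (g @` joinable x) (f x).
  move=> _ [w [z [xz wz]] <-].
  apply: le_trans (upper_semi_contra_continuous_spec_le hg wz) _.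
  exact: le_trans (hgf z) (lower_semi_contra_continuous_spec_le hf xz).
have gx_in x : (g @` joinable x) (g x) by exists x; first exact: joinable_refl.
exists (fun x => sup (g @` joinable x)); split.
  apply: spec_invariant_contra_continuous => // x y xy.
  by rewrite (joinable_spec_le hL hX xy).
move=> x; split; first by apply: ub_le_sup (gx_in x); exists (f x).
by apply: ge_sup (ub x); exists (g x).
Qed.
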